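(* Let $D$ be a digraph with $\chi(D)>\omega$. Then there is a subdigraph $D_0\subseteq D$ with $\chi(D_0)>\omega$ such that every vertex of $D_0$ has infinite in-degree and infinite out-degree in $D_0$.
   Context: A digraph is a pair $D=(V,E)$ with $E\subseteq V^2$ such that $uv\in E$ implies $vu\notin E$. The dichromatic number $\chi(D)$ is the minimal number of acyclic vertex sets (sets inducing no directed cycle) needed to cover the vertex set of $D$. *)

From Stdlib Require Import List.
Import ListNotations.

Section Digraphs.
Variable V : Type.

Definition is_digraph (S : V -> Prop) (A : V -> V -> Prop) : Prop :=
  (forall u v, A u v -> S u /\ S v) /\ (forall u v, A u v -> ~ A v u).

Definition subdigraph (S0 : V -> Prop) (A0 : V -> V -> Prop)
  (S : V -> Prop) (A : V -> V -> Prop) : Prop :=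
  is_digraph S0 A0 /\ (forall v, S0 v -> S v) /\ (forall u v, A0 u v -> A u v).

Fixpoint walk (A : V -> V -> Prop) (x : V) (l : list V) : Prop :=
  match l with
  | [] => True
  | y :: l' => A x y /\ walk A y l'
  end.

Definition directed_cycle (A : V -> V -> Prop) (x : V) (l : list V) : Prop :=
  NoDup (x :: l) /\ walk A x l /\ A (last l x) x.

Definition acyclic_set (A : V -> V -> Prop) (X : V -> Prop) : Prop :=
  ~ exists x l, directed_cycle A x l /\ X x /\ Forall X l.

(* chi(S, A) <= omega: the vertex set can be covered by countably many
   acyclic vertex sets (a finite cover is padded with empty sets). *)
Definition dichromatic_le_omega (S : V -> Prop) (A : V -> V -> Prop) : Prop :=
  exists C : nat -> (V -> Prop),
    (forall n, (forall v, C n v -> S v) /\ acyclic_set A (C n)) /\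
    (forall v, S v -> exists n, C n v).

Definition finite_pred (P : V -> Prop) : Prop :=
  exists l : list V, forall x, P x -> In x l.

Definition infinite_indeg (A : V -> V -> Prop) (v : V) : Prop :=
  ~ finite_pred (fun u => A u v).
Definition infinite_outdeg (A : V -> V -> Prop) (v : V) : Prop :=
  ~ finite_pred (fun u => A v u).

End Digraphs.
Arguments is_digraph {V}.
Arguments subdigraph {V}.
Arguments walk {V}.
Arguments directed_cycle {V}.
Arguments acyclic_set {V}.
Arguments dichromatic_le_omega {V}.
Arguments finite_pred {V}.
Arguments infinite_indeg {V}.
Arguments infinite_outdeg {V}.

(* Call a vertex set Y guarded if each y in Y is given a finite set F(y) such
   that every directed cycle meeting Y has an arc between some y in Y and a
   vertex of F(y). The relation y -> F(y) has finite out-degrees, hence (by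
   Zorn's lemma) a proper colouring with countably many colours, and its colour
   classes are acyclic; so removing a guarded set keeps the dichromatic number
   above omega. Take a maximal guarded set Y. If a vertex v outside Y had only
   finitely many in- or out-neighbours in D - Y, these could serve as F(v) and
   Y + v would still be guarded. *)

From Stdlib Require Import List Bool Arith Lia Classical ClassicalEpsilon Cantor.
From mathcomp Require boolp classical_sets.
Import ListNotations.

Lemma zorn_preorder (T : Type) (t0 : T) (R : T -> T -> Prop) :
  (forall t, R t t) -> (forall r s t, R r s -> R s t -> R r t) ->
  (forall C : T -> Prop, (forall s t, C s -> C t -> R s t \/ R t s) ->
     exists t, forall s, C s -> R s t) ->
  exists t, forall s, R t s -> R s t.
Proof.
  intros Hrefl Htrans Hchain.
  assert (Rb : forall s t, boolp.asbool (R s t) = true <-> R s t).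
  { intros s t; symmetry; apply reflect_iff, boolp.asboolP. }
  destruct (@classical_sets.ZL_preorder T t0 (fun s t => boolp.asbool (R s t)))
    as [m Hm].
  - intro t; apply Rb; auto.
  - intros r s t Hrs Hst; apply Rb; apply Rb in Hrs, Hst; eauto.
  - intros C HC; destruct (Hchain C) as [t Ht].
    + intros s u Hs Hu; destruct (HC s u Hs Hu); [left|right]; apply Rb; auto.
    + exists t; intros s Hs; apply Rb; auto.
  - exists m; intros s Hs; apply Rb, Hm, Rb, Hs.
Qed.

Section FiniteOutdegreeColouring.
Variables (V : Type) (H : V -> V -> Prop).
Hypothesis H_finite_out : forall a, finite_pred (H a).
Hypothesis H_irrefl : forall a, ~ H a a.

Record closed_colouring := {
  dom : V -> Prop;
  colour : V -> nat;
  dom_closed : forall a b, dom a -> H a b -> dom b;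
  colour_proper : forall a b, dom a -> dom b -> H a b -> colour a <> colour b }.

Definition colouring_extends (c c' : closed_colouring) : Prop :=
  (forall x, dom c x -> dom c' x) /\ (forall x, dom c x -> colour c x = colour c' x).

Definition empty_colouring : closed_colouring.
Proof. refine {| dom := fun _ => False; colour := fun _ => 0 |}; tauto. Defined.

Section ChainUnion.
Variable C : closed_colouring -> Prop.
Hypothesis C_chain : forall c c', C c -> C c' ->
  colouring_extends c c' \/ colouring_extends c' c.

Definition union_colour (x : V) : nat :=
  colour (epsilon (inhabits empty_colouring) (fun c => C c /\ dom c x)) x.

Lemma union_colour_eq c x : C c -> dom c x -> union_colour x = colour c x.
Proof.
  intros Hc Hx; unfold union_colour.
  destruct (epsilon_spec (inhabits empty_colouring) (fun c => C c /\ dom c x)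
              (ex_intro _ c (conj Hc Hx))) as [Hc' Hx'].
  destruct (C_chain c _ Hc Hc') as [[_ E]|[_ E]]; [symmetry|]; auto.
Qed.

Definition chain_union : closed_colouring.
Proof.
  refine {| dom := fun x => exists c, C c /\ dom c x; colour := union_colour |}.
  - intros a b [c [Hc Ha]] Hab; exists c; split; [|eapply dom_closed]; eauto.
  - intros a b [c [Hc Ha]] [c' [Hc' Hb]] Hab.
    rewrite (union_colour_eq c a Hc Ha), (union_colour_eq c' b Hc' Hb).
    destruct (C_chain c c' Hc Hc') as [[Hd E]|[Hd E]].
    + rewrite E by auto; apply colour_proper; auto.
    + rewrite (E b) by auto; apply colour_proper; auto.
Defined.

Lemma chain_union_extends c : C c -> colouring_extends c chain_union.
Proof.
  intro Hc; split; [intros x Hx; exists c; auto|].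
  intros x Hx; symmetry; apply union_colour_eq; auto.
Qed.
End ChainUnion.

Definition out_list (a : V) : list V :=
  proj1_sig (constructive_indefinite_description _ (H_finite_out a)).

Lemma out_list_spec a b : H a b -> In b (out_list a).
Proof.
  unfold out_list; destruct (constructive_indefinite_description _ _); simpl; auto.
Qed.

(* A colouring of an [H]-closed set extends to the set reachable from [a0]:
   that set is countable, so it can be coloured injectively, with each new
   colour above the old colours of the vertex's out-neighbours. *)
Section ReachableExtension.
Variables (c : closed_colouring) (a0 : V).

Fixpoint layers (n : nat) : list V :=
  match n with
  | 0 => [a0]
  | S n => layers n ++ flat_map out_list (layers n)
  end.

Definition reachable (y : V) : Prop := exists n, In y (layers n).

Lemma reachable_closed a b : reachable a -> H a b -> reachable b.
Proof.
  intros [n Hn] Hab; exists (S n); simpl; apply in_or_app; right.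
  apply in_flat_map; exists a; split; auto; apply out_list_spec; auto.
Qed.

Definition layer_position (y : V) : nat * nat :=
  epsilon (inhabits (0, 0)) (fun p => nth_error (layers (fst p)) (snd p) = Some y).

Lemma layer_position_spec y : reachable y ->
  nth_error (layers (fst (layer_position y))) (snd (layer_position y)) = Some y.
Proof.
  intros [n Hn]; destruct (In_nth_error _ _ Hn) as [i Hi].
  apply (epsilon_spec (inhabits (0, 0))
           (fun p => nth_error (layers (fst p)) (snd p) = Some y)).
  exists (n, i); auto.
Qed.

Definition fresh_colour (y : V) : nat :=
  to_nat (to_nat (layer_position y), S (list_max (map (colour c) (out_list y)))).

Lemma fresh_colour_gt a b : H a b -> colour c b < fresh_colour a.
Proof.
  intro Hab; unfold fresh_colour.
  pose proof (to_nat_non_decreasing (to_nat (layer_position a))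
                (S (list_max (map (colour c) (out_list a))))).
  assert (colour c b <= list_max (map (colour c) (out_list a))).
  { assert (Hle := proj1 (list_max_le (map (colour c) (out_list a)) _) (le_n _)).
    rewrite Forall_forall in Hle; apply Hle, in_map, out_list_spec, Hab. }
  lia.
Qed.

Lemma fresh_colour_inj a b : reachable a -> reachable b ->
  fresh_colour a = fresh_colour b -> a = b.
Proof.
  intros Ha Hb E; unfold fresh_colour in E.
  apply to_nat_inj in E; injection E as E _; apply to_nat_inj in E.
  pose proof (layer_position_spec a Ha) as Pa.
  pose proof (layer_position_spec b Hb) as Pb.
  rewrite E, Pb in Pa; injection Pa as <-; reflexivity.
Qed.

Definition extended_colour (x : V) : nat :=
  if excluded_middle_informative (dom c x) then colour c x else fresh_colour x.

Definition reachable_extension : closed_colouring.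
Proof.
  refine {| dom := fun x => dom c x \/ reachable x; colour := extended_colour |}.
  - intros a b [Ha|Ha] Hab; [left; eapply dom_closed | right; eapply reachable_closed];
      eauto.
  - intros a b Ha Hb Hab; unfold extended_colour.
    destruct (excluded_middle_informative (dom c a)) as [ca|ca];
      destruct (excluded_middle_informative (dom c b)) as [cb|cb].
    + apply colour_proper; auto.
    + exfalso; apply cb; eapply dom_closed; eauto.
    + pose proof (fresh_colour_gt a b Hab); lia.
    + destruct Ha as [|Ha]; [tauto|]; destruct Hb as [|Hb]; [tauto|].
      intro E; apply (H_irrefl b); rewrite <- (fresh_colour_inj a b Ha Hb E) at 1.
      exact Hab.
Defined.

Lemma reachable_extension_extends : colouring_extends c reachable_extension.
Proof.
  split; [intros x Hx; left; auto|].
  intros x Hx; simpl; unfold extended_colour.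
  destruct (excluded_middle_informative (dom c x)); tauto.
Qed.

Lemma reachable_extension_dom : dom reachable_extension a0.
Proof. right; exists 0; simpl; auto. Qed.
End ReachableExtension.

Theorem finite_outdegree_colouring :
  exists col : V -> nat, forall a b, H a b -> col a <> col b.
Proof.
  destruct (zorn_preorder closed_colouring empty_colouring colouring_extends)
    as [c Hmax].
  - intro c; split; auto.
  - intros r s t [h1 h2] [h3 h4]; split; auto.
    intros x Hx; rewrite h2 by auto; auto.
  - intros C HC; exists (chain_union C HC); apply chain_union_extends.
  - assert (Hall : forall x, dom c x).
    { intro x; apply NNPP; intro Hx.
      destruct (Hmax _ (reachable_extension_extends c x)) as [Hsub _].
      apply Hx, Hsub, reachable_extension_dom. }
    exists (colour c); intros a b Hab; apply colour_proper; auto.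
Qed.
End FiniteOutdegreeColouring.

Section CycleArcs.
Context {V : Type}.
Implicit Types (x y a b v : V) (l : list V).

Fixpoint walk_arc x l a b : Prop :=
  match l with
  | [] => False
  | y :: l' => (a = x /\ b = y) \/ walk_arc y l' a b
  end.

Definition cycle_arc x l a b : Prop := walk_arc x l a b \/ (a = last l x /\ b = x).

Lemma last_cons x y l : last (y :: l) x = last l y.
Proof.
  revert x y; induction l as [|z l IH]; intros x y; [reflexivity|].
  change (last (z :: l) x = last (z :: l) y); rewrite !IH; reflexivity.
Qed.

Lemma last_in x l : In (last l x) (x :: l).
Proof.
  revert x; induction l as [|y l IH]; intro x; [left; reflexivity|].
  rewrite last_cons; right; apply IH.
Qed.

Lemma walk_arc_in x l a b : walk_arc x l a b -> In a (x :: l) /\ In b (x :: l).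
Proof.
  revert x; induction l as [|y l IH]; simpl; intros x Hab; [tauto|].
  destruct Hab as [[-> ->]|Hab]; [tauto|].
  destruct (IH y Hab); simpl in *; tauto.
Qed.

Lemma walk_arc_walk (A : V -> V -> Prop) x l a b :
  walk A x l -> walk_arc x l a b -> A a b.
Proof.
  revert x; induction l as [|y l IH]; simpl; intros x Hw Hab; [tauto|].
  destruct Hw as [Hxy Hw], Hab as [[-> ->]|Hab]; eauto.
Qed.

Lemma cycle_arc_in x l a b : cycle_arc x l a b -> In a (x :: l) /\ In b (x :: l).
Proof.
  intros [Hab|[-> ->]]; [apply walk_arc_in; auto|].
  split; [apply last_in|left; reflexivity].
Qed.

Lemma cycle_arc_arc (A : V -> V -> Prop) x l a b :
  directed_cycle A x l -> cycle_arc x l a b -> A a b.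
Proof. intros [_ [Hw Hl]] [Hab|[-> ->]]; [eapply walk_arc_walk|]; eauto. Qed.

Lemma cycle_arc_from x l v : In v (x :: l) -> exists b, cycle_arc x l v b.
Proof.
  revert x; induction l as [|y l IH]; intros x Hv.
  - destruct Hv as [<-|[]]; exists x; right; auto.
  - destruct Hv as [<-|Hv]; [exists y; left; left; auto|].
    destruct (IH y Hv) as [b [Hb|[Hl ->]]].
    + exists b; left; right; auto.
    + exists x; right; rewrite last_cons; auto.
Qed.

Lemma cycle_arc_to x l v : In v (x :: l) -> exists a, cycle_arc x l a v.
Proof.
  revert x; induction l as [|y l IH]; intros x Hv.
  - destruct Hv as [<-|[]]; exists x; right; auto.
  - destruct Hv as [<-|Hv]; [exists (last (y :: l) x); right; auto|].
    destruct (IH y Hv) as [a [Ha|[_ ->]]].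
    + exists a; left; right; auto.
    + exists x; left; left; auto.
Qed.
End CycleArcs.

Definition induced {V : Type} (A : V -> V -> Prop) (P : V -> Prop) (u w : V) : Prop :=
  A u w /\ P u /\ P w.

Section Digraph.
Variables (V : Type) (S : V -> Prop) (A : V -> V -> Prop).
Hypothesis HD : is_digraph S A.
Implicit Types (x y a b u v : V) (l : list V).

Lemma arc_irrefl a : ~ A a a.
Proof. intro h; exact (proj2 HD a a h h). Qed.

Lemma cycle_vertex_in x l u : directed_cycle A x l -> In u (x :: l) -> S u.
Proof.
  intros Hc Hu; destruct (cycle_arc_from x l u Hu) as [b Hb].
  exact (proj1 (proj1 HD u b (cycle_arc_arc A x l u b Hc Hb))).
Qed.

Lemma induced_subdigraph (P : V -> Prop) :
  (forall v, P v -> S v) -> subdigraph P (induced A P) S A.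
Proof.
  intro HP; split; [split|split].
  - intros u w [_ Huw]; exact Huw.
  - intros u w [Huw _] [Hwu _]; exact (proj2 HD u w Huw Hwu).
  - exact HP.
  - intros u w [Huw _]; exact Huw.
Qed.

Lemma walk_induced (P : V -> Prop) x l :
  walk A x l -> (forall u, In u (x :: l) -> P u) -> walk (induced A P) x l.
Proof.
  revert x; induction l as [|y l IH]; simpl; intros x Hw HP; auto.
  destruct Hw as [Hxy Hw]; repeat split; auto.
Qed.

Lemma acyclic_set_induced (P X : V -> Prop) :
  (forall v, X v -> P v) -> acyclic_set (induced A P) X -> acyclic_set A X.
Proof.
  intros HXP HX [x [l [[Hnd [Hw Hl]] [Hx Hls]]]]; apply HX.
  assert (Hall : forall u, In u (x :: l) -> X u).
  { intros u [<-|Hu]; [exact Hx|]; rewrite Forall_forall in Hls; auto. }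
  exists x, l; repeat split; auto.
  - apply walk_induced; auto.
  - apply HXP, Hall, last_in.
Qed.

Lemma dichromatic_le_omega_of_two_covers (C1 C2 : nat -> V -> Prop) :
  (forall n, (forall v, C1 n v -> S v) /\ acyclic_set A (C1 n)) ->
  (forall n, (forall v, C2 n v -> S v) /\ acyclic_set A (C2 n)) ->
  (forall v, S v -> (exists n, C1 n v) \/ (exists n, C2 n v)) ->
  dichromatic_le_omega S A.
Proof.
  intros H1 H2 Hcov.
  exists (fun n => if Nat.even n then C1 (Nat.div2 n) else C2 (Nat.div2 n)); split.
  - intro n; destruct (Nat.even n); auto.
  - intros v Hv; destruct (Hcov v Hv) as [[n Hn]|[n Hn]].
    + exists (2 * n); rewrite Nat.even_even, Nat.div2_double; exact Hn.
    + exists (2 * n + 1).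
      rewrite Nat.even_odd, Nat.add_1_r, Nat.div2_succ_double; exact Hn.
Qed.

Record cycle_guard := {
  guarded : V -> Prop;
  guard : V -> V -> Prop;
  guarded_in : forall v, guarded v -> S v;
  guard_finite : forall v, guarded v -> finite_pred (guard v);
  guard_cycle : forall x l, directed_cycle A x l ->
    (exists v, In v (x :: l) /\ guarded v) ->
    exists a b, cycle_arc x l a b /\
      (guarded a /\ guard a b \/ guarded b /\ guard b a) }.

Definition guard_extends (g g' : cycle_guard) : Prop :=
  (forall v, guarded g v -> guarded g' v) /\
  (forall v, guarded g v -> forall w, guard g v w <-> guard g' v w).

Definition empty_guard : cycle_guard.
Proof.
  refine {| guarded := fun _ => False; guard := fun _ _ => False |}; try tauto.
  intros x l _ [v [_ []]].
Defined.

Lemma guarded_acyclic_cover (g : cycle_guard) :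
  exists C : nat -> V -> Prop,
    (forall n, (forall v, C n v -> S v) /\ acyclic_set A (C n)) /\
    (forall v, guarded g v -> exists n, C n v).
Proof.
  set (G := fun a b => guarded g a /\ guard g a b /\ a <> b).
  destruct (finite_outdegree_colouring V G) as [col Hcol].
  { intro a; destruct (classic (guarded g a)) as [Ha|Ha].
    - destruct (guard_finite g a Ha) as [l Hl]; exists l.
      intros b [_ [Hb _]]; auto.
    - exists []; intros b [Ha' _]; tauto. }
  { intros a [_ [_ Ha]]; auto. }
  exists (fun n v => guarded g v /\ col v = n); split.
  - intro n; split; [intros v [Hv _]; exact (guarded_in g v Hv)|].
    intros [x [l [Hc [Hx Hl]]]].
    assert (Hall : forall u, In u (x :: l) -> guarded g u /\ col u = n).
    { intros u [<-|Hu]; [exact Hx|]; rewrite Forall_forall in Hl; auto. }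
    destruct (guard_cycle g x l Hc (ex_intro _ x (conj (or_introl eq_refl) (proj1 Hx))))
      as [a [b [Hab Hguard]]].
    destruct (cycle_arc_in x l a b Hab) as [Ia Ib].
    assert (a <> b) by (intros <-; exact (arc_irrefl a (cycle_arc_arc A x l a a Hc Hab))).
    destruct (Hall a Ia) as [_ Ca], (Hall b Ib) as [_ Cb].
    destruct Hguard as [[Ga Gab]|[Gb Gba]].
    + apply (Hcol a b); [repeat split|]; congruence.
    + apply (Hcol b a); [repeat split|]; congruence.
  - intros v Hv; exists (col v); auto.
Qed.

Section GuardChain.
Variable C : cycle_guard -> Prop.
Hypothesis C_chain : forall g g', C g -> C g' -> guard_extends g g' \/ guard_extends g' g.

Definition union_guard v w : Prop := exists g, C g /\ guarded g v /\ guard g v w.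

Lemma union_guard_iff g v w : C g -> guarded g v -> (union_guard v w <-> guard g v w).
Proof.
  intros Hg Hv; split; [|intro Hvw; exists g; auto].
  intros [g' [Hg' [Hv' Hvw]]].
  destruct (C_chain g g' Hg Hg') as [[_ E]|[_ E]]; [apply (E v Hv)|apply (E v Hv')]; auto.
Qed.

Definition chain_guard : cycle_guard.
Proof.
  refine {| guarded := fun v => exists g, C g /\ guarded g v; guard := union_guard |}.
  - intros v [g [_ Hv]]; exact (guarded_in g v Hv).
  - intros v [g [Hg Hv]]; destruct (guard_finite g v Hv) as [l Hl]; exists l.
    intros w Hw; apply Hl, (union_guard_iff g v w Hg Hv), Hw.
  - intros x l Hc [v [Hin [g [Hg Hv]]]].
    destruct (guard_cycle g x l Hc (ex_intro _ v (conj Hin Hv)))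
      as [a [b [Hab [[Ga Gab]|[Gb Gba]]]]]; exists a, b; split; auto.
    + left; split; [exists g; auto|]; apply (union_guard_iff g); auto.
    + right; split; [exists g; auto|]; apply (union_guard_iff g); auto.
Defined.

Lemma chain_guard_extends g : C g -> guard_extends g chain_guard.
Proof.
  intro Hg; split; [intros v Hv; exists g; auto|].
  intros v Hv w; symmetry; apply union_guard_iff; auto.
Qed.
End GuardChain.

Section GuardExtension.
Variables (g : cycle_guard) (v : V) (Q : V -> Prop).
Hypothesis v_in : S v.
Hypothesis v_unguarded : ~ guarded g v.
Hypothesis Q_finite : finite_pred Q.
Hypothesis Q_guards : forall x l, directed_cycle A x l -> In v (x :: l) ->
  (forall u, In u (x :: l) -> ~ guarded g u) ->
  exists a b, cycle_arc x l a b /\ (a = v /\ Q b \/ b = v /\ Q a).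

Definition extended_guard u w : Prop := u = v /\ Q w \/ u <> v /\ guard g u w.

Definition guard_extension : cycle_guard.
Proof.
  refine {| guarded := fun u => guarded g u \/ u = v; guard := extended_guard |}.
  - intros u [Hu| ->]; [exact (guarded_in g u Hu)|exact v_in].
  - intros u [Hu| ->].
    + destruct (guard_finite g u Hu) as [l Hl]; exists l.
      intros w [[-> _]|[_ Huw]]; [tauto|auto].
    + destruct Q_finite as [l Hl]; exists l.
      intros w [[_ Hw]|[Hvv _]]; [auto|tauto].
  - intros x l Hc Hmeet.
    destruct (classic (exists u, In u (x :: l) /\ guarded g u)) as [Hg|Hg].
    + destruct (guard_cycle g x l Hc Hg) as [a [b [Hab [[Ga Gab]|[Gb Gba]]]]];
        exists a, b; split; auto.
      * left; split; [left; auto|right; split; auto]; intros ->; tauto.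
      * right; split; [left; auto|right; split; auto]; intros ->; tauto.
    + assert (Hv : In v (x :: l)).
      { destruct Hmeet as [u [Hu [Gu| ->]]]; [exfalso; eauto|exact Hu]. }
      destruct (Q_guards x l Hc Hv) as [a [b [Hab [[-> Qb]|[-> Qa]]]]].
      * intros u Hu Gu; eauto.
      * exists v, b; split; auto; left; split; [right|left]; auto.
      * exists a, v; split; auto; right; split; [right|left]; auto.
Defined.

Lemma guard_extension_extends : guard_extends g guard_extension.
Proof.
  split; [intros u Hu; left; auto|].
  intros u Hu w; simpl; unfold extended_guard; split.
  - intro Huw; right; split; auto; intros ->; tauto.
  - intros [[-> _]|[_ Huw]]; [tauto|auto].
Qed.
End GuardExtension.

Lemma maximal_guard_exists : exists g : cycle_guard,
  forall g', guard_extends g g' -> guard_extends g' g.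
Proof.
  apply (zorn_preorder cycle_guard empty_guard).
  - intro g; split; [auto|tauto].
  - intros r s t [h1 h2] [h3 h4]; split; auto.
    intros v Hv w; rewrite (h2 v Hv w); auto.
  - intros C HC; exists (chain_guard C HC); apply chain_guard_extends.
Qed.

Section MaximalGuard.
Variable g : cycle_guard.
Hypothesis g_maximal : forall g', guard_extends g g' -> guard_extends g' g.

Definition unguarded (u : V) : Prop := S u /\ ~ guarded g u.

Lemma unguarded_not_le_omega :
  ~ dichromatic_le_omega S A -> ~ dichromatic_le_omega unguarded (induced A unguarded).
Proof.
  intros Hchi [C [HC Hcov]]; apply Hchi.
  destruct (guarded_acyclic_cover g) as [C' [HC' Hcov']].
  apply (dichromatic_le_omega_of_two_covers C C').
  - intro n; destruct (HC n) as [Hsub Hac]; split.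
    + intros v Hv; exact (proj1 (Hsub v Hv)).
    + exact (acyclic_set_induced unguarded (C n) Hsub Hac).
  - exact HC'.
  - intros v Hv; destruct (classic (guarded g v)) as [Gv|Gv]; [right; auto|left].
    apply Hcov; split; auto.
Qed.

Lemma unguarded_unextendable v (Q : V -> Prop) :
  unguarded v -> finite_pred Q ->
  ~ (forall x l, directed_cycle A x l -> In v (x :: l) ->
       (forall u, In u (x :: l) -> ~ guarded g u) ->
       exists a b, cycle_arc x l a b /\ (a = v /\ Q b \/ b = v /\ Q a)).
Proof.
  intros [Sv Gv] HQ Hguards.
  destruct (g_maximal _ (guard_extension_extends g v Q Sv Gv HQ Hguards)) as [Hsub _].
  apply Gv, Hsub; right; reflexivity.
Qed.

Lemma unguarded_infinite_degrees v :
  unguarded v ->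
  infinite_indeg (induced A unguarded) v /\ infinite_outdeg (induced A unguarded) v.
Proof.
  intros Uv; split; intro Hfin.
  - apply (unguarded_unextendable v _ Uv Hfin).
    intros x l Hc Hv Hall; destruct (cycle_arc_to x l v Hv) as [a Ha].
    destruct (cycle_arc_in x l a v Ha) as [Ia _].
    exists a, v; split; auto; right; split; auto.
    split; [exact (cycle_arc_arc A x l a v Hc Ha)|].
    split; [split; [exact (cycle_vertex_in x l a Hc Ia)|exact (Hall a Ia)]|exact Uv].
  - apply (unguarded_unextendable v _ Uv Hfin).
    intros x l Hc Hv Hall; destruct (cycle_arc_from x l v Hv) as [b Hb].
    destruct (cycle_arc_in x l v b Hb) as [_ Ib].
    exists v, b; split; auto; left; split; auto.
    split; [exact (cycle_arc_arc A x l v b Hc Hb)|].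
    split; [exact Uv|split; [exact (cycle_vertex_in x l b Hc Ib)|exact (Hall b Ib)]].
Qed.
End MaximalGuard.
End Digraph.

Theorem proposition3p1 (V : Type) (S : V -> Prop) (A : V -> V -> Prop) :
  is_digraph S A ->
  ~ dichromatic_le_omega S A ->
  exists (S0 : V -> Prop) (A0 : V -> V -> Prop),
    subdigraph S0 A0 S A /\
    ~ dichromatic_le_omega S0 A0 /\
    (forall v, S0 v -> infinite_indeg A0 v /\ infinite_outdeg A0 v).
Proof.
  intros HD Hchi.
  destruct (maximal_guard_exists V S A) as [g Hmax].
  exists (unguarded V S A g), (induced A (unguarded V S A g)); split; [|split].
  - apply (induced_subdigraph V S A HD); intros v [Sv _]; exact Sv.
  - exact (unguarded_not_le_omega V S A HD g Hchi).
  - exact (unguarded_infinite_degrees V S A HD g Hmax).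
Qed.
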